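(* Let $(Q,P)$ be a weakly quasi-lattice ordered group and let $\Lambda$ be a $P$-graph with $\mathrm{FA}(\Lambda)\neq\emptyset$. For $\mu,\nu\in\mathrm{FA}(\Lambda)$ and finite $J,K\subseteq\Lambda$, let $$Z(\mu\setminus J,\nu\setminus K)=\{(x,d(\mu)d(\nu)^{-1},y)\in\mathcal{G}(\Lambda): \mu\in x,\ x\cap J=\emptyset,\ \nu\in y,\ y\cap K=\emptyset,\ x\cdot d(\mu)=y\cdot d(\nu)\}.$$ The collection of all such sets, where $\mu,\nu\in\mathrm{FA}(\Lambda)$ and $J,K$ are finite subsets of $\Lambda$, is a basis for the topology on $\mathcal{G}(\Lambda)$.
   Context: $(Q,P)$ weakly quasi-lattice ordered: $Q$ a discrete group, $P\subseteq Q$ a subsemigroup containing the identity $e$ with $P\cap P^{-1}=\{e\}$, and, with $p\le r$ meaning $pq=r$ for some $q\in P$, any two elements of $P$ with a common upper bound have a least common upper bound. A $P$-graph is a countable small category $\Lambda$ (range/source $r,s$) with a functor $d:\Lambda\to P$ with unique factorisation (if $d(\lambda)=pq$ there are unique $\mu,\nu$ with $\lambda=\mu\nu$, $d(\mu)=p$, $d(\nu)=q$). Write $\Lambda^m=d^{-1}(m)$, $\lambda\Lambda=\{\lambda\mu: s(\lambda)=r(\mu)\}$, $\mu\preceq\lambda$ iff $\lambda\in\mu\Lambda$. $\mathrm{FA}(\Lambda)$ is the set of $\lambda$ such that for all $\mu\in\lambda\Lambda,\nu\in\Lambda$ there is finite $J\subseteq\Lambda$ with $\mu\Lambda\cap\nu\Lambda=\bigcup_{\kappa\in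 J}\kappa\Lambda$. A filter is a nonempty hereditary and directed subset of $\Lambda$ (w.r.t. $\preceq$). $\mathcal{P}(\Lambda)$ has the product topology from $\{0,1\}^\Lambda$ (basis $\{x: K_1\subseteq x\subseteq\Lambda\setminus K_2\}$, $K_1,K_2$ finite); subsets have the subspace topology. Path space $\mathcal{X}(\Lambda)=\{x\text{ filter}: x\cap\mathrm{FA}(\Lambda)\neq\emptyset\}$. For $x\in\mathcal{X}(\Lambda)$, $m\in P$ with $x\cap\Lambda^m\neq\emptyset$ (write $x\in\mathrm{dom}(m)$), $x(0,m)$ is the unique element of $x\cap\Lambda^m$ and $x\cdot m=\{\mu: x(0,m)\mu\in x\}$. The path groupoid $\mathcal{G}(\Lambda)$ is the set of $(x,q,y)\in\mathcal{X}(\Lambda)\times Q\times\mathcal{X}(\Lambda)$ such that $q=mn^{-1}$, $x\in\mathrm{dom}(m)$, $y\in\mathrm{dom}(n)$, $x\cdot m=y\cdot n$ for some $m,n\in P$, with product $(x,q,y)(y,r,z)=(x,qr,z)$, inverse $(y,q^{-1},x)$, and the topology generated by the basis of sets $\{(x,mn^{-1},y)\in\mathcal{G}(\Lambda): x\in U,\ y\in V,\ x\in\mathrm{dom}(m),\ y\in\mathrm{dom}(n),\ x\cdot m=y\cdot n\}$ for $m,n\in P$ and $U,V\subseteq\mathcal{X}(\Lambda)$ open. *)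

From Stdlib Require Import List.
Import ListNotations.
Set Implicit Arguments.

Record WQLOG := {
  Q :> Type;
  qmul : Q -> Q -> Q;
  qinv : Q -> Q;
  qe : Q;
  qmul_assoc : forall a b c, qmul a (qmul b c) = qmul (qmul a b) c;
  qmul_e_l : forall a, qmul qe a = a;
  qmul_e_r : forall a, qmul a qe = a;
  qmul_inv_l : forall a, qmul (qinv a) a = qe;
  qmul_inv_r : forall a, qmul a (qinv a) = qe;
  Pc : Q -> Prop;
  Pc_e : Pc qe;
  Pc_mul : forall a b, Pc a -> Pc b -> Pc (qmul a b);
  Pc_cap : forall a, Pc a -> Pc (qinv a) -> a = qe;
  Pc_wqlo : forall p q, Pc p -> Pc q ->
    (exists r, Pc r /\ (exists a, Pc a /\ qmul p a = r) /\ (exists b, Pc b /\ qmul q b = r)) ->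
    exists l, Pc l /\ (exists a, Pc a /\ qmul p a = l) /\ (exists b, Pc b /\ qmul q b = l) /\
      forall r, Pc r -> (exists a, Pc a /\ qmul p a = r) -> (exists b, Pc b /\ qmul q b = r) ->
        exists c, Pc c /\ qmul l c = r
}.

(* A countable small category with morphisms [Mor], objects [Obj]; composition
   [comp l m] (= lm, first m then l) is meaningful when [src l = rng m]. *)
Record PGraph (G : WQLOG) := {
  Obj : Type;
  Mor : Type;
  rng : Mor -> Obj;
  src : Mor -> Obj;
  idm : Obj -> Mor;
  comp : Mor -> Mor -> Mor;
  src_idm : forall v, src (idm v) = v;
  rng_idm : forall v, rng (idm v) = v;
  src_comp : forall l m, src l = rng m -> src (comp l m) = src m;
  rng_comp : forall l m, src l = rng m -> rng (comp l m) = rng l;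
  comp_idm_l : forall l, comp (idm (rng l)) l = l;
  comp_idm_r : forall l, comp l (idm (src l)) = l;
  comp_assoc : forall a b c, src a = rng b -> src b = rng c ->
                 comp a (comp b c) = comp (comp a b) c;
  countable_Mor : exists f : Mor -> nat, forall a b, f a = f b -> a = b;
  deg : Mor -> G;
  deg_P : forall l, Pc G (deg l);
  deg_idm : forall v, deg (idm v) = qe G;
  deg_comp : forall l m, src l = rng m -> deg (comp l m) = qmul G (deg l) (deg m);
  unique_fact : forall l p q, Pc G p -> Pc G q -> deg l = qmul G p q ->
    exists mu nu, src mu = rng nu /\ l = comp mu nu /\ deg mu = p /\ deg nu = q /\
      forall mu' nu', src mu' = rng nu' -> l = comp mu' nu' -> deg mu' = p -> deg nu' = q ->
        mu' = mu /\ nu' = nu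
}.

Section PGraphDefs.
Variables (G : WQLOG) (L : PGraph G).
Notation M := (Mor L).

Definition inLam (lam kappa : M) : Prop :=
  exists mu, src L lam = rng L mu /\ kappa = comp L lam mu.

Definition preceq (mu lam : M) : Prop := inLam mu lam.

Definition FA (lam : M) : Prop :=
  forall mu nu, inLam lam mu ->
    exists J : list M, forall kappa,
      (inLam mu kappa /\ inLam nu kappa) <-> exists k, In k J /\ inLam k kappa.

Definition is_filter (x : M -> Prop) : Prop :=
  (exists l, x l) /\
  (forall mu lam, preceq mu lam -> x lam -> x mu) /\
  (forall l m, x l -> x m -> exists n, x n /\ preceq l n /\ preceq m n).

(* topology on P(Λ) = {0,1}^Λ *)
Definition basicP (K1 K2 : list M) (x : M -> Prop) : Prop :=
  (forall k, In k K1 -> x k) /\ (forall k, In k K2 -> ~ x k).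

Definition Popen (U : (M -> Prop) -> Prop) : Prop :=
  forall x, U x -> exists K1 K2, basicP K1 K2 x /\ forall y, basicP K1 K2 y -> U y.

Definition Xpath (x : M -> Prop) : Prop :=
  is_filter x /\ exists l, x l /\ FA l.

Definition Xopen (U : (M -> Prop) -> Prop) : Prop :=
  (forall x, U x -> Xpath x) /\
  exists O, Popen O /\ forall x, Xpath x -> (U x <-> O x).

Definition xdom (x : M -> Prop) (m : G) : Prop := exists l, x l /\ deg L l = m.

(* x · m = { mu : x(0,m) mu ∈ x }, with x(0,m) the (unique) element of x ∩ Λ^m *)
Definition shift (x : M -> Prop) (m : G) (mu : M) : Prop :=
  exists l, x l /\ deg L l = m /\ src L l = rng L mu /\ x (comp L l mu).

Definition set_eq (A B : M -> Prop) : Prop := forall mu, A mu <-> B mu.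

Definition GPt : Type := ((M -> Prop) * G * (M -> Prop))%type.

Definition Gmem (g : GPt) : Prop :=
  let '(x, q, y) := g in
  Xpath x /\ Xpath y /\
  exists m n, Pc G m /\ Pc G n /\ q = qmul G m (qinv G n) /\
    xdom x m /\ xdom y n /\ set_eq (shift x m) (shift y n).

Definition Gbasic (m n : G) (U V : (M -> Prop) -> Prop) (g : GPt) : Prop :=
  let '(x, q, y) := g in
  Gmem g /\ q = qmul G m (qinv G n) /\ U x /\ V y /\
  xdom x m /\ xdom y n /\ set_eq (shift x m) (shift y n).

Definition Gopen (W : GPt -> Prop) : Prop :=
  forall g, W g -> exists m n U V, Pc G m /\ Pc G n /\ Xopen U /\ Xopen V /\
    Gbasic m n U V g /\ forall h, Gbasic m n U V h -> W h.

Definition Zset (mu nu : M) (J K : list M) (g : GPt) : Prop :=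
  let '(x, q, y) := g in
  Gmem g /\ q = qmul G (deg L mu) (qinv G (deg L nu)) /\
  x mu /\ (forall k, In k J -> ~ x k) /\
  y nu /\ (forall k, In k K -> ~ y k) /\
  set_eq (shift x (deg L mu)) (shift y (deg L nu)).

Definition is_basis_of_Gtop (B : (GPt -> Prop) -> Prop) : Prop :=
  (forall Z, B Z -> Gopen Z) /\
  (forall W, Gopen W -> forall g, W g -> exists Z, B Z /\ Z g /\ forall h, Z h -> W h).

End PGraphDefs.

(* A basic open set of G(Λ) is given by degrees (m, n) and open sets U ∋ x,
   V ∋ y, which can be shrunk to cylinders fixed by finitely many paths.  For
   (x, mn⁻¹, y) in it put l = x(0,m), l' = y(0,n).  Since x·m = y·n,
   zigzagging between the filters x and y yields one path α with lα ∈ x and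
   l'α ∈ y lying above all those finitely many paths and above elements of
   FA(Λ).  Extending l and l' by a common α preserves the equation
   x·d(l) = y·d(l') in both directions, and d(lα)d(l'α)⁻¹ = mn⁻¹, so
   Z(lα \ K, l'α \ K') is a neighbourhood of the point inside the basic set.
   Conversely each Z(μ \ J, ν \ K) is itself a basic set. *)

From Stdlib Require Import List.
Import ListNotations.

Section GroupFacts.
Context {G : WQLOG}.
Implicit Types a b c m n d : G.

Lemma qmul_cancel_l a {b c} : qmul G a b = qmul G a c -> b = c.
Proof.
  intro E. rewrite <- (qmul_e_l G b), <- (qmul_e_l G c), <- (qmul_inv_l G a).
  rewrite <- !qmul_assoc, E. reflexivity.
Qed.

Lemma qinv_mul a b : qinv G (qmul G a b) = qmul G (qinv G b) (qinv G a).
Proof.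
  apply (qmul_cancel_l (qmul G a b)).
  rewrite qmul_inv_r, <- qmul_assoc, (qmul_assoc G b), qmul_inv_r, qmul_e_l, qmul_inv_r.
  reflexivity.
Qed.

Lemma qmul_common_factor_r m n d :
  qmul G (qmul G m d) (qinv G (qmul G n d)) = qmul G m (qinv G n).
Proof.
  rewrite qinv_mul, <- qmul_assoc, (qmul_assoc G d), qmul_inv_r, qmul_e_l. reflexivity.
Qed.

End GroupFacts.

Section PGraphFacts.
Context {G : WQLOG} {L : PGraph G}.
Local Notation "l ∘ m" := (comp L l m) (at level 40, left associativity).

Lemma preceq_comp {l a} : src L l = rng L a -> preceq L l (l ∘ a).
Proof. intro S. exists a. split; [exact S | reflexivity]. Qed.

Lemma preceq_trans {a b c} : preceq L a b -> preceq L b c -> preceq L a c.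
Proof.
  intros (u & Su & ->) (v & Sv & ->).
  rewrite (src_comp L a u Su) in Sv.
  exists (u ∘ v). split.
  - rewrite (rng_comp L u v Sv). exact Su.
  - symmetry. exact (comp_assoc L a u v Su Sv).
Qed.

Lemma FA_preceq {l l'} : FA L l -> preceq L l l' -> FA L l'.
Proof. intros H Hl mu nu Hm. apply H. exact (preceq_trans Hl Hm). Qed.

Lemma deg_ratio_comp {l l' al} :
  src L l = rng L al -> src L l' = rng L al ->
  qmul G (deg L (l ∘ al)) (qinv G (deg L (l' ∘ al))) = qmul G (deg L l) (qinv G (deg L l')).
Proof. intros S S'. rewrite (deg_comp L _ _ S), (deg_comp L _ _ S'). apply qmul_common_factor_r. Qed.

Lemma comp_inj {l a l' a'} :
  src L l = rng L a -> src L l' = rng L a' -> l ∘ a = l' ∘ a' ->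
  deg L l = deg L l' -> l = l' /\ a = a'.
Proof.
  intros S S' E D.
  assert (Da : deg L a = deg L a').
  { apply (qmul_cancel_l (deg L l)).
    rewrite <- (deg_comp L _ _ S), D, <- (deg_comp L _ _ S'), E. reflexivity. }
  destruct (unique_fact L (l ∘ a) (deg L l) (deg L a) (deg_P L l) (deg_P L a) (deg_comp L l a S))
    as (? & ? & _ & _ & _ & _ & U).
  destruct (U l a S eq_refl eq_refl eq_refl) as [E1 E2].
  destruct (U l' a' S' E (eq_sym D) (eq_sym Da)) as [E1' E2'].
  split; congruence.
Qed.

Lemma comp_cancel_l {l a b} :
  src L l = rng L a -> src L l = rng L b -> l ∘ a = l ∘ b -> a = b.
Proof. intros Sa Sb E. exact (proj2 (comp_inj Sa Sb E eq_refl)). Qed.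

Section Filter.
Context {x : Mor L -> Prop} (Hx : is_filter L x).

Lemma filter_preceq {k c} : preceq L k c -> x c -> x k.
Proof. exact (proj1 (proj2 Hx) k c). Qed.

Lemma filter_prefix {l a} : src L l = rng L a -> x (l ∘ a) -> x l.
Proof. intro S. apply filter_preceq. exact (preceq_comp S). Qed.

Lemma filter_directed {a b} : x a -> x b -> exists c, x c /\ preceq L a c /\ preceq L b c.
Proof. exact (proj2 (proj2 Hx) a b). Qed.

Lemma filter_deg_inj {l l'} : x l -> x l' -> deg L l = deg L l' -> l = l'.
Proof.
  intros H H' D.
  destruct (filter_directed H H') as (c & _ & (a & S & E) & (a' & S' & E')).
  refine (proj1 (comp_inj S S' _ D)). congruence.
Qed.

Lemma filter_upper_bound (K : list (Mor L)) :
  (forall k, In k K -> x k) -> exists c, x c /\ forall k, In k K -> preceq L k c.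
Proof.
  induction K as [| k K IH]; intro HK.
  - destruct (proj1 Hx) as [c Hc]. exists c. split; [exact Hc | intros k []].
  - destruct IH as (c & Hc & Hub); [intros j Hj; exact (HK j (or_intror Hj)) |].
    destruct (filter_directed Hc (HK k (or_introl eq_refl))) as (d & Hd & Hcd & Hkd).
    exists d. split; [exact Hd |].
    intros j [<- | Hj]; [exact Hkd | exact (preceq_trans (Hub j Hj) Hcd)].
Qed.

(* For l ∈ x, x·d(l) is {μ : lμ ∈ x}: the witness x(0, d(l)) must be l. *)
Lemma shift_deg l mu :
  x l -> shift L x (deg L l) mu <-> src L l = rng L mu /\ x (l ∘ mu).
Proof.
  intro Hl. split.
  - intros (l0 & H0 & D0 & S0 & H0'). rewrite (filter_deg_inj H0 Hl D0) in S0, H0'. auto.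
  - intros [S H]. exists l. auto.
Qed.

Lemma shift_comp l al ga :
  src L l = rng L al -> src L al = rng L ga -> x (l ∘ al) ->
  shift L x (deg L (l ∘ al)) ga <-> shift L x (deg L l) (al ∘ ga).
Proof.
  intros S Sal H.
  rewrite (shift_deg _ ga H), (shift_deg _ _ (filter_prefix S H)).
  rewrite (src_comp L _ _ S), (rng_comp L _ _ Sal), (comp_assoc L _ _ _ S Sal).
  tauto.
Qed.

End Filter.

Section ShiftTransfer.
Context {x y : Mor L -> Prop} {l l' al : Mor L}
  (Hx : is_filter L x) (Hy : is_filter L y)
  (S : src L l = rng L al) (S' : src L l' = rng L al)
  (Hlal : x (l ∘ al)) (Hlal' : y (l' ∘ al)).

Lemma shift_incl_extend :
  (forall be, shift L x (deg L l) be -> shift L y (deg L l') be) ->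
  forall ga, shift L x (deg L (l ∘ al)) ga -> shift L y (deg L (l' ∘ al)) ga.
Proof.
  intros Hincl ga Hga.
  assert (Sal : src L al = rng L ga).
  { rewrite <- (src_comp L _ _ S). exact (proj1 (proj1 (shift_deg Hx _ _ Hlal) Hga)). }
  apply (shift_comp Hy _ _ _ S' Sal Hlal'), Hincl, (shift_comp Hx _ _ _ S Sal Hlal), Hga.
Qed.

(* β and α have a common extension βγ₁ = αγ₂ in x·d(l); the hypothesis puts
   αγ₂, hence its prefix β, into y·d(l'). *)
Lemma shift_incl_restrict :
  (forall ga, shift L x (deg L (l ∘ al)) ga -> shift L y (deg L (l' ∘ al)) ga) ->
  forall be, shift L x (deg L l) be -> shift L y (deg L l') be.
Proof.
  intros Hincl be Hbe.
  apply (shift_deg Hx _ _ (filter_prefix Hx S Hlal)) in Hbe as [Sbe Hlbe].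
  destruct (filter_directed Hx Hlbe Hlal) as (c & Hc & (g1 & Sg1 & E1) & (g2 & Sg2 & E2)).
  rewrite (src_comp L _ _ Sbe) in Sg1. rewrite (src_comp L _ _ S) in Sg2.
  assert (Ebe : be ∘ g1 = al ∘ g2).
  { apply (comp_cancel_l (l := l)).
    - rewrite (rng_comp L _ _ Sg1). exact Sbe.
    - rewrite (rng_comp L _ _ Sg2). exact S.
    - rewrite (comp_assoc L _ _ _ Sbe Sg1), (comp_assoc L _ _ _ S Sg2). congruence. }
  assert (Hg2 : shift L x (deg L (l ∘ al)) g2).
  { apply (shift_deg Hx _ _ Hlal). split.
    - rewrite (src_comp L _ _ S). exact Sg2.
    - rewrite <- E2. exact Hc. }
  apply Hincl, (shift_comp Hy _ _ _ S' Sg2 Hlal') in Hg2.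
  rewrite <- Ebe in Hg2.
  apply (shift_deg Hy _ _ (filter_prefix Hy S' Hlal')) in Hg2 as [Sg Hg].
  rewrite (rng_comp L _ _ Sg1) in Sg.
  rewrite (comp_assoc L _ _ _ Sg Sg1) in Hg.
  apply (shift_deg Hy _ _ (filter_prefix Hy S' Hlal')). split; [exact Sg |].
  apply (filter_prefix Hy (a := g1)); [| exact Hg].
  rewrite (src_comp L _ _ Sg). exact Sg1.
Qed.

End ShiftTransfer.

Lemma shift_eq_extend {x y l l' al} :
  is_filter L x -> is_filter L y -> src L l = rng L al -> src L l' = rng L al ->
  x (l ∘ al) -> y (l' ∘ al) ->
  set_eq L (shift L x (deg L l)) (shift L y (deg L l')) ->
  set_eq L (shift L x (deg L (l ∘ al))) (shift L y (deg L (l' ∘ al))).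
Proof.
  intros Hx Hy S S' Hlal Hlal' E ga. split.
  - apply (shift_incl_extend Hx Hy S S' Hlal Hlal'). intro be. exact (proj1 (E be)).
  - apply (shift_incl_extend Hy Hx S' S Hlal' Hlal). intro be. exact (proj2 (E be)).
Qed.

Lemma shift_eq_restrict {x y l l' al} :
  is_filter L x -> is_filter L y -> src L l = rng L al -> src L l' = rng L al ->
  x (l ∘ al) -> y (l' ∘ al) ->
  set_eq L (shift L x (deg L (l ∘ al))) (shift L y (deg L (l' ∘ al))) ->
  set_eq L (shift L x (deg L l)) (shift L y (deg L l')).
Proof.
  intros Hx Hy S S' Hlal Hlal' E be. split.
  - apply (shift_incl_restrict Hx Hy S S' Hlal Hlal'). intro ga. exact (proj1 (E ga)).
  - apply (shift_incl_restrict Hy Hx S' S Hlal' Hlal). intro ga. exact (proj2 (E ga)).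
Qed.

(* Zigzag: bound A ∪ {l} in x by lα₀, move α₀ to y, bound B ∪ {l'α₀} in y by
   l'α₀β, and move α = α₀β back to x. *)
Lemma shift_eq_common_extension {x y l l'} (A B : list (Mor L)) :
  is_filter L x -> is_filter L y -> x l -> y l' ->
  set_eq L (shift L x (deg L l)) (shift L y (deg L l')) ->
  (forall a, In a A -> x a) -> (forall b, In b B -> y b) ->
  exists al, src L l = rng L al /\ src L l' = rng L al /\
    x (l ∘ al) /\ y (l' ∘ al) /\
    (forall a, In a A -> preceq L a (l ∘ al)) /\
    (forall b, In b B -> preceq L b (l' ∘ al)).
Proof.
  intros Hx Hy Hl Hl' E HA HB.
  destruct (filter_upper_bound Hx (l :: A)) as (c & Hc & Hubc);
    [intros a [<- | Ha]; auto |].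
  destruct (Hubc l (or_introl eq_refl)) as (a0 & Sa0 & ->).
  assert (Ha0 : shift L y (deg L l') a0)
    by (apply (proj1 (E a0)), (shift_deg Hx _ _ Hl); auto).
  apply (shift_deg Hy _ _ Hl') in Ha0 as [Sa0' Hla0'].
  destruct (filter_upper_bound Hy (l' ∘ a0 :: B)) as (d & Hd & Hubd);
    [intros b [<- | Hb]; auto |].
  destruct (Hubd _ (or_introl eq_refl)) as (be & Sbe & ->).
  rewrite (src_comp L _ _ Sa0') in Sbe.
  assert (S : src L l = rng L (a0 ∘ be)) by (rewrite (rng_comp L _ _ Sbe); exact Sa0).
  assert (S' : src L l' = rng L (a0 ∘ be)) by (rewrite (rng_comp L _ _ Sbe); exact Sa0').
  assert (Hlal' : y (l' ∘ (a0 ∘ be))) by (rewrite (comp_assoc L _ _ _ Sa0' Sbe); exact Hd).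
  assert (Hal : shift L x (deg L l) (a0 ∘ be))
    by (apply (proj2 (E _)), (shift_deg Hy _ _ Hl'); auto).
  apply (shift_deg Hx _ _ Hl) in Hal as [_ Hlal].
  exists (a0 ∘ be). do 4 (split; [assumption |]). split.
  - intros a Ha. apply (preceq_trans (Hubc a (or_intror Ha))).
    rewrite (comp_assoc L _ _ _ Sa0 Sbe). apply preceq_comp.
    rewrite (src_comp L _ _ Sa0). exact Sbe.
  - intros b Hb. rewrite (comp_assoc L _ _ _ Sa0' Sbe). exact (Hubd b (or_intror Hb)).
Qed.

Definition Xcyl (mu : Mor L) (J : list (Mor L)) (x : Mor L -> Prop) : Prop :=
  Xpath L x /\ x mu /\ forall k, In k J -> ~ x k.

Lemma Xopen_Xcyl mu J : Xopen L (Xcyl mu J).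
Proof.
  split; [intros x Hx; exact (proj1 Hx) |].
  exists (basicP L [mu] J). split.
  - intros x Hx. exists [mu], J. split; [exact Hx | intros y Hy; exact Hy].
  - intros x Xx. unfold Xcyl, basicP. simpl. split.
    + intros (_ & Hmu & HJ). split; [intros k [<- | []]; exact Hmu | exact HJ].
    + intros [Hmu HJ]. auto.
Qed.

Lemma Xopen_basic_nbhd {U x} :
  Xopen L U -> U x ->
  exists K1 K2, basicP L K1 K2 x /\ forall y, Xpath L y -> basicP L K1 K2 y -> U y.
Proof.
  intros (HU & O & PO & HO) Ux.
  destruct (PO x (proj1 (HO x (HU x Ux)) Ux)) as (K1 & K2 & Bx & HB).
  exists K1, K2. split; [exact Bx |].
  intros y Xy By. exact (proj2 (HO y Xy) (HB y By)).
Qed.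

Lemma Zset_Gbasic mu nu J K g :
  Zset mu nu J K g <-> Gbasic (deg L mu) (deg L nu) (Xcyl mu J) (Xcyl nu K) g.
Proof.
  destruct g as [[x q] y]. unfold Zset, Gbasic, Xcyl. split.
  - intros (Gm & Hq & Hmu & HJ & Hnu & HK & Hs).
    pose proof Gm as (Xx & Xy & _).
    do 4 (split; [auto |]).
    split; [exists mu; auto |]. split; [exists nu; auto | exact Hs].
  - intros (Gm & Hq & (_ & Hmu & HJ) & (_ & Hnu & HK) & _ & _ & Hs).
    do 6 (split; [assumption |]). exact Hs.
Qed.

Lemma Gopen_Zset (mu nu : Mor L) (J K : list (Mor L)) : Gopen (Zset mu nu J K).
Proof.
  intros g Hg.
  exists (deg L mu), (deg L nu), (Xcyl mu J), (Xcyl nu K).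
  do 4 (split; [first [apply deg_P | apply Xopen_Xcyl] |]).
  split; [exact (proj1 (Zset_Gbasic _ _ _ _ g) Hg) |].
  intros h Hh. exact (proj2 (Zset_Gbasic _ _ _ _ h) Hh).
Qed.

Lemma Zset_sub_Gbasic {l l' al} {K1 K2 K1' K2' : list (Mor L)} {U V h} :
  src L l = rng L al -> src L l' = rng L al ->
  (forall k, In k K1 -> preceq L k (l ∘ al)) ->
  (forall k, In k K1' -> preceq L k (l' ∘ al)) ->
  (forall x, Xpath L x -> basicP L K1 K2 x -> U x) ->
  (forall y, Xpath L y -> basicP L K1' K2' y -> V y) ->
  Zset (l ∘ al) (l' ∘ al) K2 K2' h -> Gbasic (deg L l) (deg L l') U V h.
Proof.
  intros S S' Hub Hub' HU HV.
  destruct h as [[x q] y]. intros (Gm & Hq & Hmu & HK2 & Hnu & HK2' & Hs).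
  pose proof Gm as (Xx & Xy & _).
  pose proof (proj1 Xx) as Fx. pose proof (proj1 Xy) as Fy.
  split; [exact Gm |]. split; [rewrite Hq; exact (deg_ratio_comp S S') |].
  split; [apply HU; [exact Xx | split; [|exact HK2]];
          intros k Hk; exact (filter_preceq Fx (Hub k Hk) Hmu) |].
  split; [apply HV; [exact Xy | split; [|exact HK2']];
          intros k Hk; exact (filter_preceq Fy (Hub' k Hk) Hnu) |].
  split; [exists l; split; [exact (filter_prefix Fx S Hmu) | reflexivity] |].
  split; [exists l'; split; [exact (filter_prefix Fy S' Hnu) | reflexivity] |].
  exact (shift_eq_restrict Fx Fy S S' Hmu Hnu Hs).
Qed.

Lemma Gbasic_refine {m n U V g} :
  Xopen L U -> Xopen L V -> Gbasic m n U V g ->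
  exists mu nu J K, FA L mu /\ FA L nu /\ Zset mu nu J K g /\
    forall h, Zset mu nu J K h -> Gbasic m n U V h.
Proof.
  intros HU HV. destruct g as [[x q] y].
  intros (Gm & Hq & Ux & Vy & (l & Hl & <-) & (l' & Hl' & <-) & Hs).
  pose proof Gm as ((Fx & f & Hf & FAf) & (Fy & f' & Hf' & FAf') & _).
  destruct (Xopen_basic_nbhd HU Ux) as (K1 & K2 & [HK1 HK2] & HUb).
  destruct (Xopen_basic_nbhd HV Vy) as (K1' & K2' & [HK1' HK2'] & HVb).
  destruct (shift_eq_common_extension (f :: K1) (f' :: K1') Fx Fy Hl Hl' Hs)
    as (al & S & S' & Hlal & Hlal' & Hub & Hub');
    [intros a [<- | Ha]; auto | intros b [<- | Hb]; auto |].
  exists (l ∘ al), (l' ∘ al), K2, K2'. split; [| split; [| split]].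
  - exact (FA_preceq FAf (Hub f (or_introl eq_refl))).
  - exact (FA_preceq FAf' (Hub' f' (or_introl eq_refl))).
  - split; [exact Gm |]. split; [rewrite Hq; symmetry; exact (deg_ratio_comp S S') |].
    do 4 (split; [assumption |]).
    exact (shift_eq_extend Fx Fy S S' Hlal Hlal' Hs).
  - intro h. apply (Zset_sub_Gbasic (K1 := K1) (K1' := K1') S S'); [| | exact HUb | exact HVb].
    + intros k Hk. exact (Hub k (or_intror Hk)).
    + intros k Hk. exact (Hub' k (or_intror Hk)).
Qed.

End PGraphFacts.

Theorem proposition5p23 (G : WQLOG) (L : PGraph G) :
  (exists l, @FA G L l) ->
  @is_basis_of_Gtop G L
    (fun Z => exists mu nu (J K : list (Mor L)),
        @FA G L mu /\ @FA G L nu /\ Z = @Zset G L mu nu J K).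
Proof.
  intros _. split.
  - intros Z (mu & nu & J & K & _ & _ & ->). apply Gopen_Zset.
  - intros W HW g Hg.
    destruct (HW g Hg) as (m & n & U & V & _ & _ & HU & HV & Hgb & HsubW).
    destruct (Gbasic_refine HU HV Hgb) as (mu & nu & J & K & FAmu & FAnu & Hz & Hsub).
    exists (Zset mu nu J K). split; [exists mu, nu, J, K; auto |].
    split; [exact Hz |]. intros h Hh. exact (HsubW h (Hsub h Hh)).
Qed.
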